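(* Let $V$ be a set and $o$ a partial 3-order on $V$ with the $(4,3)$ property. Then there are no distinct $A,B,C,D\in V$ with $o(ABD)=o(BCD)=o(CAD)=1$.
   Context: A partial orientation on $V$ is a map $o$ from ordered triples of distinct elements of $V$ to $\{+1,0,-1\}$ with $o(uvw)=o(wuv)=o(vwu)=-o(uwv)=-o(vuw)=-o(wvu)$. It is a partial 3-order if it satisfies the interiority condition: for all distinct $a,b,c,d$, $o(abd)=o(bcd)=o(cad)=1$ implies $o(abc)=1$. It has the $(4,3)$ property if among any four distinct elements of $V$ there are three, $x,y,z$, with $o(xyz)=0$. *)

From Stdlib Require Import ZArith.
Open Scope Z_scope.

(* We represent it as a
   total function V -> V -> V -> Z; its values on non-distinct triples are
   irrelevant (all conditions only constrain distinct triples). *)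
Definition distinct3 {V : Type} (u v w : V) : Prop :=
  u <> v /\ v <> w /\ u <> w.

Definition partial_orientation {V : Type} (o : V -> V -> V -> Z) : Prop :=
  forall u v w : V, distinct3 u v w ->
    (o u v w = 1 \/ o u v w = 0 \/ o u v w = -1) /\
    o u v w = o w u v /\ o u v w = o v w u /\
    o u v w = - o u w v /\ o u v w = - o v u w /\ o u v w = - o w v u.

Definition interiority {V : Type} (o : V -> V -> V -> Z) : Prop :=
  forall a b c d : V,
    a <> b -> a <> c -> a <> d -> b <> c -> b <> d -> c <> d ->
    o a b d = 1 -> o b c d = 1 -> o c a d = 1 -> o a b c = 1.

Definition partial_3order {V : Type} (o : V -> V -> V -> Z) : Prop :=
  partial_orientation o /\ interiority o.

Definition prop43 {V : Type} (o : V -> V -> V -> Z) : Prop :=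
  forall a b c d : V,
    a <> b -> a <> c -> a <> d -> b <> c -> b <> d -> c <> d ->
    exists x y z : V,
      (x = a \/ x = b \/ x = c \/ x = d) /\
      (y = a \/ y = b \/ y = c \/ y = d) /\
      (z = a \/ z = b \/ z = c \/ z = d) /\
      distinct3 x y z /\ o x y z = 0.

From Stdlib Require Import ZArith Lia.
Open Scope Z_scope.

(* By interiority the three positive triangles around [D] force [o(ABC) = 1], so
   all four triples of [A, B, C, D] are non-degenerate.  Since a partial
   orientation only changes sign under permutations, no triple of distinct
   points among [A, B, C, D] has orientation [0], contradicting the (4,3)
   property. *)

Section PartialOrientation.

Variables (V : Type) (o : V -> V -> V -> Z).
Hypothesis o_orientation : partial_orientation o.

Lemma orientation_neq0_perm (u v w x y z : V) :
  distinct3 u v w -> o u v w <> 0 ->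
  (x = u \/ x = v \/ x = w) -> (y = u \/ y = v \/ y = w) ->
  (z = u \/ z = v \/ z = w) -> distinct3 x y z -> o x y z <> 0.
Proof.
  intros Huvw Hne Hx Hy Hz [Hxy [Hyz Hxz]].
  destruct (o_orientation u v w Huvw) as (_ & e1 & e2 & e3 & e4 & e5).
  destruct Hx as [-> | [-> | ->]]; destruct Hy as [-> | [-> | ->]];
    destruct Hz as [-> | [-> | ->]]; congruence || lia.
Qed.

Local Ltac solve_face u v w :=
  apply (orientation_neq0_perm u v w); solve [ auto | tauto | repeat split; auto ].

Lemma four_points_orientation_neq0 (a b c d x y z : V) :
  a <> b -> a <> c -> a <> d -> b <> c -> b <> d -> c <> d ->
  o a b c <> 0 -> o a b d <> 0 -> o b c d <> 0 -> o c a d <> 0 ->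
  (x = a \/ x = b \/ x = c \/ x = d) ->
  (y = a \/ y = b \/ y = c \/ y = d) ->
  (z = a \/ z = b \/ z = c \/ z = d) ->
  distinct3 x y z -> o x y z <> 0.
Proof.
  intros Hab Hac Had Hbc Hbd Hcd Habc Habd Hbcd Hcad Hx Hy Hz Hxyz.
  assert (Dabc : distinct3 a b c) by (repeat split; auto).
  assert (Dabd : distinct3 a b d) by (repeat split; auto).
  assert (Dbcd : distinct3 b c d) by (repeat split; auto).
  assert (Dcad : distinct3 c a d) by (repeat split; auto).
  destruct Hxyz as [Hxy [Hyz Hxz]].
  destruct Hx as [-> | [-> | [-> | ->]]]; destruct Hy as [-> | [-> | [-> | ->]]];
    destruct Hz as [-> | [-> | [-> | ->]]]; try congruence;
    first [ solve_face a b c | solve_face a b d | solve_face b c d | solve_face c a d ].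
Qed.

End PartialOrientation.

Theorem lemma5 (V : Type) (o : V -> V -> V -> Z) :
  partial_3order o -> prop43 o ->
  ~ (exists A B C D : V,
       A <> B /\ A <> C /\ A <> D /\ B <> C /\ B <> D /\ C <> D /\
       o A B D = 1 /\ o B C D = 1 /\ o C A D = 1).
Proof.
  intros [Hor Hint] H43
    (A & B & C & D & HAB & HAC & HAD & HBC & HBD & HCD & HABD & HBCD & HCAD).
  assert (HABC : o A B C = 1) by (apply (Hint A B C D); auto).
  destruct (H43 A B C D HAB HAC HAD HBC HBD HCD)
    as (x & y & z & Hx & Hy & Hz & Hxyz & H0).
  revert H0; apply (four_points_orientation_neq0 V o Hor A B C D); auto; lia.
Qed.
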